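(* Let $(X,d)$ be a geodesic metric space such that the kernel $\exp(-\lambda\, d^2(x,y))$ is positive definite on $X$ for all $\lambda>0$. Then $X$ is contractible, and hence simply connected.
   Context: A geodesic metric space is a metric space in which any two points $x,y$ are joined by a path $\gamma\colon[0,L]\to X$ with $\gamma(0)=x$, $\gamma(L)=y$ and $d(\gamma(t),\gamma(t'))=|t-t'|$ for all $t,t'$. A positive definite kernel on $X$ (with its metric topology) is a continuous $k\colon X\times X\to\mathbb{R}$ with $\sum_{i,j}c_ic_jk(x_i,x_j)\ge0$ for all $n$, $x_1,\dots,x_n\in X$, $c_1,\dots,c_n\in\mathbb{R}$. *)

From mathcomp Require Import all_boot all_order all_algebra.
From mathcomp Require Import all_classical all_reals.
From mathcomp.analysis Require Import sequences exp.
Set Implicit Arguments. Unset Strict Implicit. Unset Printing Implicit Defensive.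
Import Order.TTheory GRing.Theory Num.Theory.
Local Open Scope ring_scope.

Section Defs.
Variables (R : realType) (X : Type).

Definition is_metric (d : X -> X -> R) : Prop :=
  (forall x y, 0 <= d x y) /\
  (forall x y, d x y = 0 <-> x = y) /\
  (forall x y, d x y = d y x) /\
  (forall x y z, d x z <= d x y + d y z).

Definition geodesic (d : X -> X -> R) : Prop :=
  forall x y, exists gamma : R -> X,
    gamma 0 = x /\ gamma (d x y) = y /\
    forall t t', 0 <= t <= d x y -> 0 <= t' <= d x y ->
      d (gamma t) (gamma t') = `|t - t'|.

Definition kernel_continuous (d : X -> X -> R) (k : X -> X -> R) : Prop :=
  forall x y e, 0 < e -> exists2 delta, 0 < delta &
    forall x' y', d x x' < delta -> d y y' < delta -> `|k x y - k x' y'| < e.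

Definition pos_def_kernel (d : X -> X -> R) (k : X -> X -> R) : Prop :=
  kernel_continuous d k /\
  forall (n : nat) (xs : 'I_n -> X) (c : 'I_n -> R),
    0 <= \sum_(i < n) \sum_(j < n) c i * c j * k (xs i) (xs j).

Definition contractible (d : X -> X -> R) : Prop :=
  exists (x0 : X) (H : X -> R -> X),
    (forall x t, 0 <= t <= 1 -> forall e, 0 < e -> exists2 delta, 0 < delta &
       forall y s, 0 <= s <= 1 -> d x y < delta -> `|t - s| < delta ->
         d (H x t) (H y s) < e) /\
    (forall x, H x 0 = x) /\ (forall x, H x 1 = x0).

Definition path_continuous (d : X -> X -> R) (g : R -> X) : Prop :=
  forall t, 0 <= t <= 1 -> forall e, 0 < e -> exists2 delta, 0 < delta &
    forall s, 0 <= s <= 1 -> `|t - s| < delta -> d (g t) (g s) < e.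

Definition simply_connected (d : X -> X -> R) : Prop :=
  (forall x y, exists g : R -> X, path_continuous d g /\ g 0 = x /\ g 1 = y) /\
  (forall g : R -> X, path_continuous d g -> g 0 = g 1 ->
     exists F : R -> R -> X,
       (forall s t, 0 <= s <= 1 -> 0 <= t <= 1 -> forall e, 0 < e ->
          exists2 delta, 0 < delta &
          forall s' t', 0 <= s' <= 1 -> 0 <= t' <= 1 ->
            `|s - s'| < delta -> `|t - t'| < delta -> d (F s t) (F s' t') < e) /\
       (forall s, F s 0 = g s) /\ (forall s, F s 1 = g 0) /\
       (forall t, F 0 t = g 0) /\ (forall t, F 1 t = g 0)).

End Defs.

(* By Schoenberg's theorem, positive definiteness of every Gaussian kernel [exp (- l d^2)] makes
   [d^2] conditionally negative definite, i.e. [X] embeds isometrically in a Hilbert space.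
   Testing this on five points shows that pushing [x] and [y] by the same fraction [t] along
   geodesics towards a base point [b] shrinks their distance exactly by the factor [1 - t], as for
   segments in a Hilbert space. Hence the geodesic contraction towards [b] is jointly continuous:
   it contracts [X], joins any two points by a path, and shrinks every loop to its base point. *)

From mathcomp Require Import all_boot all_order all_algebra.
From mathcomp Require Import all_classical all_reals.
From mathcomp.analysis Require Import sequences exp.
From mathcomp Require Import ring lra.
Set Implicit Arguments. Unset Strict Implicit. Unset Printing Implicit Defensive.
Import Order.TTheory GRing.Theory Num.Theory.
Local Open Scope ring_scope.

Lemma expRN_taylor_bounds {R : realType} (x : R) : 0 <= x ->
  0 <= expR (- x) + x - 1 <= x ^+ 2.
Proof.
move=> x_ge0; have lb := expR_ge1Dx (- x).
apply/andP; split; first lra.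
have eNx_gt0 := expR_gt0 (- x).
have eNx_le : expR (- x) * (1 + x) <= 1.
  rewrite -[leRHS](mulVf (lt0r_neq0 (expR_gt0 x))) -expRN.
  by apply: ler_wpM2l; [exact: ltW | exact: expR_ge1Dx].
have cube : 1 <= (1 - x + x ^+ 2) * (1 + x).
  have -> : (1 - x + x ^+ 2) * (1 + x) = 1 + x ^+ 3 by ring.
  by rewrite lerDl exprn_ge0.
suff : expR (- x) <= 1 - x + x ^+ 2 by lra.
by rewrite -(ler_pM2r (_ : 0 < 1 + x)) ?(le_trans eNx_le) //; lra.
Qed.

Lemma ler0_linear_quadratic {R : realFieldType} (a b : R) :
  (forall l, 0 < l -> l * a <= l ^+ 2 * b) -> a <= 0.
Proof.
move=> h; rewrite leNgt; apply/negP => a_gt0.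
have k_gt0 : 0 < `|b| + 1 by rewrite ltr_pwDr ?normr_ge0.
have l_gt0 : 0 < a / (`|b| + 1) by exact: divr_gt0.
have := h _ l_gt0; rewrite expr2 -mulrA ler_pM2l //.
rewrite mulrAC ler_pdivlMr // => /le_trans/(_ (ler_wpM2l (ltW a_gt0) (ler_norm b))).
nra.
Qed.

Lemma eq0_linear_quadratic {R : realFieldType} (a b : R) :
  (forall l, l * a + l ^+ 2 * b <= 0) -> a = 0.
Proof.
move=> h; apply/eqP; rewrite eq_le; apply/andP; split.
  by apply: (@ler0_linear_quadratic _ _ (- b)) => l _; have := h l; lra.
rewrite -oppr_le0; apply: (@ler0_linear_quadratic _ _ (- b)) => l _.
by have := h (- l); rewrite sqrrN; lra.
Qed.

Section ConditionallyNegativeDefinite.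
Variables (R : realType) (X : Type).

Definition gram (k : X -> X -> R) n (p : 'I_n -> X) (c c' : 'I_n -> R) : R :=
  \sum_(i < n) \sum_(j < n) c i * c' j * k (p i) (p j).

Definition cnd_kernel (D : X -> X -> R) : Prop :=
  forall n (p : 'I_n -> X) (c : 'I_n -> R), \sum_(i < n) c i = 0 -> gram D p c c <= 0.

Lemma gram_cst n (p : 'I_n -> X) (c : 'I_n -> R) (a : R) :
  gram (fun _ _ => a) p c c = a * (\sum_(i < n) c i) ^+ 2.
Proof.
rewrite /gram expr2 mulr_suml mulr_sumr; apply: eq_bigr => i _.
by rewrite !mulr_sumr; apply: eq_bigr => j _; ring.
Qed.

(* On coefficient vectors of sum zero, [gram (exp (- l D)) = - l * gram D + O(l ^ 2)]. *)
Lemma cnd_of_gaussian_psd (D : X -> X -> R) :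
  (forall x y, 0 <= D x y) ->
  (forall l, 0 < l -> forall n (p : 'I_n -> X) (c : 'I_n -> R),
     0 <= gram (fun x y => expR (- (l * D x y))) p c c) ->
  cnd_kernel D.
Proof.
move=> D_ge0 psd n p c c0.
pose K := gram (fun x y => D x y ^+ 2) p (fun i => `|c i|) (fun i => `|c i|).
apply: (@ler0_linear_quadratic _ _ K) => l l_gt0.
pose r x y := expR (- (l * D x y)) + l * D x y - 1.
have r_le : gram r p c c <= l ^+ 2 * K.
  rewrite /K /gram mulr_sumr; apply: ler_sum => i _; rewrite mulr_sumr.
  apply: ler_sum => j _; rewrite /r.
  have /andP[r_ge0 r_le] := expRN_taylor_bounds (mulr_ge0 (ltW l_gt0) (D_ge0 (p i) (p j))).
  apply: le_trans (ler_norm _) _.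
  rewrite !normrM (ger0_norm r_ge0) [leRHS]mulrCA -exprMn.
  by apply: ler_wpM2l; rewrite ?mulr_ge0 ?normr_ge0.
have c0_sq : gram (fun _ _ => 1) p c c = 0 by rewrite gram_cst c0 expr2 !mulr0.
suff <- : gram r p c c - gram (fun x y => expR (- (l * D x y))) p c c
          + gram (fun _ _ => 1) p c c = l * gram D p c c.
  by have := psd l l_gt0 n p c; rewrite c0_sq; lra.
rewrite /gram mulr_sumr -sumrB -big_split; apply: eq_bigr => i _ /=.
rewrite mulr_sumr -sumrB -big_split; apply: eq_bigr => j _ /=; rewrite /r; ring.
Qed.
End ConditionallyNegativeDefinite.

Section NullVectors.
Variables (R : realType) (X : Type) (D : X -> X -> R).
Hypothesis D_cnd : cnd_kernel D.
Variables (n : nat) (p : 'I_n -> X).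

Lemma gramD (c u : 'I_n -> R) (l : R) :
  gram D p (fun i => c i + l * u i) (fun i => c i + l * u i) =
  gram D p c c + l * (gram D p c u + gram D p u c) + l ^+ 2 * gram D p u u.
Proof.
rewrite /gram -big_split !mulr_sumr -!big_split; apply: eq_bigr => i _ /=.
by rewrite -big_split !mulr_sumr -!big_split; apply: eq_bigr => j _ /=; ring.
Qed.

Lemma gram_null_orth (c u : 'I_n -> R) :
  \sum_(i < n) c i = 0 -> \sum_(i < n) u i = 0 -> gram D p u u = 0 ->
  gram D p c u + gram D p u c = 0.
Proof.
move=> c0 u0 uu0; rewrite addrC; apply: (@eq0_linear_quadratic _ _ (gram D p c c)) => l.
have sum0 : \sum_(i < n) (u i + l * c i) = 0.
  by rewrite big_split /= -mulr_sumr u0 c0 mulr0 addr0.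
by have := D_cnd p sum0; rewrite gramD uu0 add0r.
Qed.

Lemma gram_add_null (c u : 'I_n -> R) :
  \sum_(i < n) c i = 0 -> \sum_(i < n) u i = 0 -> gram D p u u = 0 ->
  gram D p (fun i => c i + u i) (fun i => c i + u i) = gram D p c c.
Proof.
move=> c0 u0 uu0.
have -> : (fun i => c i + u i) = (fun i => c i + 1 * u i).
  by apply/funext => i; rewrite mul1r.
by rewrite gramD (gram_null_orth c0 u0 uu0) uu0 !mulr0 !addr0.
Qed.
End NullVectors.

Section Homothety.
Variables (R : realType) (X : Type) (D : X -> X -> R).
Hypotheses (D_cnd : cnd_kernel D) (D_sym : forall x y, D x y = D y x)
  (D_xx : forall x, D x x = 0).

Lemma cnd_homothety (b x y m m' : X) (t : R) :
  D m x = t ^+ 2 * D x b -> D m b = (1 - t) ^+ 2 * D x b ->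
  D m' y = t ^+ 2 * D y b -> D m' b = (1 - t) ^+ 2 * D y b ->
  D m m' = (1 - t) ^+ 2 * D x y.
Proof.
move=> mx mb m'y m'b.
(* [u] and [v] are null since [m] and [m'] divide [x b] and [y b] in ratio [t];
   [w + u + v] is the difference of the indicators of [m] and [m']. *)
pose p (i : 'I_5) := nth b [:: m; m'; x; y; b] i.
pose vec (s : seq R) (i : 'I_5) := nth 0 s i.
pose u := vec [:: 1; 0; t - 1; 0; - t].
pose v := vec [:: 0; - 1; 0; 1 - t; t].
pose w := vec [:: 0; 0; 1 - t; t - 1; 0].
have sum_u : \sum_(i < 5) u i = 0.
  by rewrite !big_ord_recl big_ord0 /u /vec /=; ring.
have sum_v : \sum_(i < 5) v i = 0.
  by rewrite !big_ord_recl big_ord0 /v /vec /=; ring.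
have sum_w : \sum_(i < 5) w i = 0.
  by rewrite !big_ord_recl big_ord0 /w /vec /=; ring.
have sum_wu : \sum_(i < 5) (w i + u i) = 0 by rewrite big_split /= sum_w sum_u addr0.
have null_u : gram D p u u = 0.
  rewrite /gram !big_ord_recl !big_ord0 /p /u /vec /= !D_xx.
  by rewrite (D_sym x m) (D_sym b m) (D_sym b x) mx mb; ring.
have null_v : gram D p v v = 0.
  rewrite /gram !big_ord_recl !big_ord0 /p /v /vec /= !D_xx.
  by rewrite (D_sym y m') (D_sym b m') (D_sym b y) m'y m'b; ring.
have gram_w : gram D p w w = - 2 * ((1 - t) ^+ 2 * D x y).
  rewrite /gram !big_ord_recl !big_ord0 /p /w /vec /= !D_xx.
  by rewrite (D_sym y x); ring.
have gram_wuv : gram D p (fun i => w i + u i + v i) (fun i => w i + u i + v i)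
    = - 2 * D m m'.
  rewrite /gram !big_ord_recl !big_ord0 /p /u /v /w /vec /= !D_xx.
  by rewrite (D_sym m' m); ring.
have := gram_add_null D_cnd (c := fun i => w i + u i) sum_wu sum_v null_v.
rewrite (gram_add_null D_cnd sum_w sum_u null_u) gram_wuv gram_w; lra.
Qed.
End Homothety.

Lemma small_perturbation {R : realFieldType} (K e : R) : 0 <= K -> 0 < e ->
  exists2 delta, 0 < delta &
    forall a tau, 0 <= tau -> a < delta -> tau < delta -> a + tau * (a + K) < e.
Proof.
move=> K_ge0 e_gt0; have K2_gt0 : 0 < K + 2 by lra.
exists (Num.min 1 (e / (K + 2))); first by rewrite lt_min ltr01 divr_gt0.
move=> a tau tau_ge0; rewrite !lt_min => /andP[a1 ae] /andP[tau1 taue].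
have : tau * (a + K) <= tau * (1 + K) by apply: ler_wpM2l; lra.
have : (e / (K + 2)) * (K + 2) = e by rewrite mulfVK // gt_eqF.
nra.
Qed.

Section GeodesicContraction.
Variables (R : realType) (X : Type) (d : X -> X -> R).
Hypotheses (d_metric : is_metric d) (d2_cnd : cnd_kernel (fun x y => d x y ^+ 2)).
Variable G : X -> X -> R -> X.
Hypothesis G_geodesic : forall x y, G x y 0 = x /\ G x y (d x y) = y /\
  forall t t', 0 <= t <= d x y -> 0 <= t' <= d x y ->
    d (G x y t) (G x y t') = `|t - t'|.

Lemma d_ge0 x y : 0 <= d x y. Proof. by case: d_metric. Qed.
Lemma dC x y : d x y = d y x. Proof. by case: d_metric => _ [_ []]. Qed.
Lemma d_triangle x y z : d x z <= d x y + d y z.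
Proof. by case: d_metric => _ [_ [_]]. Qed.
Lemma dxx x : d x x = 0. Proof. by case: d_metric => _ [h _]; apply/h. Qed.

Definition geo_contract (b x : X) (t : R) : X := G x b (t * d x b).

Lemma geo_contract0 b x : geo_contract b x 0 = x.
Proof. by rewrite /geo_contract mul0r; case: (G_geodesic x b). Qed.

Lemma geo_contract1 b x : geo_contract b x 1 = b.
Proof. by rewrite /geo_contract mul1r; case: (G_geodesic x b) => _ []. Qed.

Lemma geo_contract_center b t : geo_contract b b t = b.
Proof. by rewrite /geo_contract dxx mulr0; case: (G_geodesic b b). Qed.

Lemma mulr_itv01 (t a : R) : 0 <= t <= 1 -> 0 <= a -> 0 <= t * a <= a.
Proof. by move=> /andP[t0 t1] a0; apply/andP; split; nra. Qed.

Lemma geo_contract_dist b x t s : 0 <= t <= 1 -> 0 <= s <= 1 ->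
  d (geo_contract b x t) (geo_contract b x s) = `|t - s| * d x b.
Proof.
move=> t01 s01; have [_ [_ isom]] := G_geodesic x b.
rewrite isom ?mulr_itv01 ?d_ge0 //.
by rewrite -mulrBl normrM (ger0_norm (d_ge0 _ _)).
Qed.

Lemma geo_contract_dist_source b x t : 0 <= t <= 1 ->
  d (geo_contract b x t) x = t * d x b.
Proof.
move=> /[dup] t01 /andP[t0 t1].
by rewrite -{2}(geo_contract0 b x) geo_contract_dist ?lexx ?ler01 // subr0 ger0_norm.
Qed.

Lemma geo_contract_dist_center b x t : 0 <= t <= 1 ->
  d (geo_contract b x t) b = (1 - t) * d x b.
Proof.
move=> /[dup] t01 /andP[t0 t1].
rewrite -{2}(geo_contract1 b x) geo_contract_dist ?lexx ?ler01 //.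
by rewrite distrC ger0_norm ?subr_ge0.
Qed.

Lemma geo_contract_homothety b x y t : 0 <= t <= 1 ->
  d (geo_contract b x t) (geo_contract b y t) = (1 - t) * d x y.
Proof.
move=> /[dup] t01 /andP[t0 t1]; apply/eqP.
rewrite -(eqrXn2 (_ : 0 < 2)%N) ?d_ge0 ?mulr_ge0 ?subr_ge0 ?d_ge0 //; apply/eqP.
rewrite exprMn; apply: (cnd_homothety d2_cnd) => [u v|u||||].
- by rewrite dC.
- by rewrite dxx expr2 mulr0.
- by rewrite geo_contract_dist_source // exprMn.
- by rewrite geo_contract_dist_center // exprMn.
- by rewrite geo_contract_dist_source // exprMn.
- by rewrite geo_contract_dist_center // exprMn.
Qed.

Lemma geo_contract_le b x y t s : 0 <= t <= 1 -> 0 <= s <= 1 ->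
  d (geo_contract b x t) (geo_contract b y s) <= d x y + `|t - s| * (d x y + d x b).
Proof.
move=> /[dup] t01 /andP[t0 t1] s01.
apply: le_trans (d_triangle _ (geo_contract b y t) _) _.
rewrite geo_contract_homothety // geo_contract_dist //.
apply: lerD; first by rewrite -[leRHS]mul1r ler_wpM2r ?d_ge0 //; lra.
by rewrite ler_wpM2l ?normr_ge0 // (dC x y) d_triangle.
Qed.

Lemma geo_contract_continuous b x t : 0 <= t <= 1 -> forall e, 0 < e ->
  exists2 delta, 0 < delta & forall y s, 0 <= s <= 1 -> d x y < delta ->
    `|t - s| < delta -> d (geo_contract b x t) (geo_contract b y s) < e.
Proof.
move=> t01 e e_gt0; have [delta delta_gt0 small] := small_perturbation (d_ge0 x b) e_gt0.
exists delta => // y s s01 xy ts; apply: le_lt_trans (geo_contract_le _ _ _ t01 s01) _.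
exact: small.
Qed.
End GeodesicContraction.

Theorem mainTheorem6 (R : realType) (X : Type) (d : X -> X -> R)
  (hd : is_metric d) (hgeo : geodesic d) (hne : inhabited X)
  (hpd : forall lambda : R, 0 < lambda ->
     pos_def_kernel d (fun x y => expR (- (lambda * d x y ^+ 2)))) :
  contractible d /\ simply_connected d.
Proof.
pose G x := projT1 (boolp.choice (hgeo x)).
have G_geodesic x := projT2 (boolp.choice (hgeo x)).
have d2_cnd : cnd_kernel (fun x y => d x y ^+ 2).
  by apply: cnd_of_gaussian_psd => [x y|l /hpd[]]; first exact: sqr_ge0.
pose H := geo_contract d G.
have H_cont := geo_contract_continuous hd d2_cnd (G := G) G_geodesic.
have H0 := geo_contract0 (G := G) G_geodesic.
have H1 := geo_contract1 (G := G) G_geodesic.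
split; [|split].
- case: hne => x0; exists x0, (H x0); split=> [x t t01 e /(H_cont x0 x t t01)//|].
  by split=> x; [exact: H0 | exact: H1].
- move=> x y; exists (H y x); split=> [t t01 e e_gt0|]; last by split.
  have [delta delta_gt0 close] := H_cont y x t t01 e e_gt0.
  by exists delta => // s s01; apply: close; rewrite ?(dxx hd).
- move=> g g_cont g01; exists (fun s t => H (g 0) (g s) t); split=> [s t s01 t01 e e_gt0|].
    have [delta1 delta1_gt0 close] := H_cont (g 0) (g s) t t01 e e_gt0.
    have [delta2 delta2_gt0 g_close] := g_cont s s01 delta1 delta1_gt0.
    exists (Num.min delta1 delta2) => [|s' t' s'01 t'01]; first by rewrite lt_min delta1_gt0.
    rewrite !lt_min => /andP[_ ss'] /andP[tt' _].
    exact: close (g_close s' s'01 ss') tt'.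
  split=> [s|]; first exact: H0.
  split=> [s|]; first exact: H1.
  by split=> t; rewrite ?g01; apply: (geo_contract_center hd (G := G) G_geodesic).
Qed.
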